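(* Every neighborhood of $(\pi/4,0)$ in $\{(r,\epsilon):r>0,\ \epsilon\ge0,\ r+\epsilon<\pi/2\}$ contains a point $(r,\epsilon)$ with $\epsilon>0$ such that $(\mathcal{Y}^\parallel_{0,r,\epsilon})'(0)=0$.
   Context: Fix $\varphi\in C^\infty(\mathbb{R})$ with $0\le\varphi\le1$, $\varphi(x)=0$ for $x\le0$, $\varphi(x)=1$ for $x\ge1$, and let $H$ be the Heaviside function ($H(x)=1$ for $x>0$, $H(x)=0$ for $x\le0$). For $r>0$, $\epsilon\ge0$ with $r+\epsilon<\pi/2$ and $\rho\ge0$ set $K^\parallel_{r,\epsilon}(\rho)=1-2\varphi((\rho-r)/\epsilon)$ if $\epsilon>0$ and $K^\parallel_{r,0}(\rho)=1-2H(\rho-r)$. $\mathcal{Y}^\parallel_{0,r,\epsilon}$ denotes the unique solution on $[0,\infty)$ of $\mathcal{Y}''(t)+K^\parallel_{r,\epsilon}(t)\mathcal{Y}(t)=0$ (for $\epsilon=0$ a $C^1$ weak solution, i.e. solving the equation for $t\ne r$) with $\mathcal{Y}(t)=e^{-t}$ for all $t\ge r+\epsilon$. (This is the stable Jacobi solution along radial geodesics of $g_{r,\epsilon}$; if its derivative vanishes at $0$, $\mathcal{Y}^\parallel_{0,r,\epsilon}(|t|)E(t)$, $E$ parallel and normal, is a Jacobi field decaying as $t\to\pm\infty$.) *)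

From Stdlib Require Import Reals Lra.
Open Scope R_scope.

Definition smooth (f : R -> R) : Prop :=
  exists D : nat -> R -> R,
    D O = f /\ forall (n : nat) (x : R), derivable_pt_lim (D n) x (D (S n) x).

Definition cutoff (phi : R -> R) : Prop :=
  smooth phi /\
  (forall x, 0 <= phi x <= 1) /\
  (forall x, x <= 0 -> phi x = 0) /\
  (forall x, 1 <= x -> phi x = 1).

Definition Kpar (phi : R -> R) (r eps rho : R) : R :=
  1 - 2 * phi ((rho - r) / eps).

(* Y : [0,oo) -> R (values for t < 0 are irrelevant) with derivative Y'
   is the solution Y^par_{0,r,eps} (eps > 0): Y'' + K Y = 0 on (0,oo),
   Y' (0) is the right derivative of Y at 0, and Y(t) = e^{-t} for t >= r+eps.
   Such a solution is unique on [0,oo), so Y' 0 is well determined. *)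
Definition is_Ypar (phi : R -> R) (r eps : R) (Y Y' : R -> R) : Prop :=
  (forall t, 0 < t -> derivable_pt_lim Y t (Y' t)) /\
  (forall t, 0 < t -> derivable_pt_lim Y' t (- Kpar phi r eps t * Y t)) /\
  (forall e, 0 < e -> exists d, 0 < d /\
     forall h, 0 < h < d -> Rabs ((Y h - Y 0) / h - Y' 0) < e) /\
  (forall t, r + eps <= t -> Y t = exp (- t)).

From Stdlib Require Import Reals Lra Lia Ranalysis5.
From Coquelicot Require Import Coquelicot.
Open Scope R_scope.

(* On [[0, r]] we have [K = 1], so the solution is [A cos t] and its derivative
   vanishes at [0] for free; on [[r + eps, oo)] it is [exp (- t)].  In between we
   rescale [t = r + eps + eps u] and solve [Z'' = - eps^2 (1 - 2 phi (u + 1)) Z],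
   [Z 0 = 1], [Z' 0 = - eps] by a Picard series.  The pieces glue to a C^1
   solution iff [tan r = - Z'(-1) / (eps Z(-1))], and since [Z = 1 - eps u + O(eps^2)]
   the right-hand side is [1 + O(eps)], so [r -> PI / 4] as [eps -> 0]. *)

Lemma series_geom_tail (a : nat -> R) (M rho : R) :
  0 <= rho < 1 -> 0 <= M -> (forall n, Rabs (a n) <= M * rho ^ n) ->
  ex_series a /\
  forall n, Rabs (Series a - sum_f_R0 a n) <= M * rho ^ (S n) / (1 - rho).
Proof.
  intros Hr HM Ha.
  assert (Hg : forall p, is_series (fun k => M * rho ^ p * rho ^ k) (M * rho ^ p * / (1 - rho))).
  { intro p. apply (is_series_scal (M * rho ^ p) (fun k => rho ^ k)).
    apply is_series_geom. rewrite Rabs_pos_eq; lra. }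
  assert (Habs : forall p, ex_series (fun k => Rabs (a (p + k)%nat))).
  { intro p. apply (@ex_series_le R_AbsRing R_CompleteNormedModule _ (fun k => M * rho ^ p * rho ^ k)).
    - intro k. unfold norm; simpl. rewrite Rabs_Rabsolu, Rmult_assoc, <- pow_add. apply Ha.
    - eexists; apply Hg. }
  assert (Hex : ex_series a).
  { apply ex_series_Rabs. apply (ex_series_ext _ _ (fun _ => eq_refl) (Habs 0%nat)). }
  split; [exact Hex|]. intro n.
  rewrite (Series_incr_n a (S n)) by (lia || exact Hex). simpl pred.
  replace (sum_f_R0 a n + Series (fun k => a (S n + k)%nat) - sum_f_R0 a n)
    with (Series (fun k => a (S n + k)%nat)) by ring.
  eapply Rle_trans. { apply Series_Rabs, Habs. }
  eapply Rle_trans. { apply (Series_le _ (fun k => M * rho ^ (S n) * rho ^ k)).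
    - intro k. split; [apply Rabs_pos|]. rewrite Rmult_assoc, <- pow_add. apply Ha.
    - eexists; apply Hg. }
  rewrite (is_series_unique _ _ (Hg (S n))). right; unfold Rdiv; ring.
Qed.

Lemma geom_eventually_lt (C rho e : R) : 0 <= rho < 1 -> 0 <= C -> 0 < e ->
  exists N, forall n, (n >= N)%nat -> C * rho ^ n < e.
Proof.
  intros Hr HC He.
  destruct (pow_lt_1_zero rho ltac:(rewrite Rabs_pos_eq; lra) (e / (C + 1))) as [N HN].
  { apply Rdiv_lt_0_compat; lra. }
  exists N. intros n Hn. specialize (HN n Hn).
  rewrite Rabs_pos_eq in HN by (apply pow_le; lra).
  assert (0 <= rho ^ n) by (apply pow_le; lra).
  apply Rmult_lt_compat_l with (r := C + 1) in HN; [|lra].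
  replace ((C + 1) * (e / (C + 1))) with e in HN by (field; lra). nra.
Qed.

Lemma CVU_geom (fn : nat -> R -> R) f c (r : posreal) C rho : 0 <= rho < 1 -> 0 <= C ->
  (forall n y, Boule c r y -> Rabs (f y - fn n y) <= C * rho ^ n) -> CVU fn f c r.
Proof.
  intros Hr HC H e He. destruct (geom_eventually_lt C rho e Hr HC He) as [N HN].
  exists N. intros n y Hn Hy. eapply Rle_lt_trans; [apply H; auto|]. apply HN; lia.
Qed.

Lemma Un_cv_geom (u : nat -> R) l C rho : 0 <= rho < 1 -> 0 <= C ->
  (forall n, Rabs (l - u n) <= C * rho ^ n) -> Un_cv u l.
Proof.
  intros Hr HC H e He. destruct (geom_eventually_lt C rho e Hr HC He) as [N HN].
  exists N. intros n Hn. unfold R_dist. rewrite Rabs_minus_sym.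
  eapply Rle_lt_trans; [apply H|]. apply HN; lia.
Qed.

Lemma derivable_pt_lim_sum_f_R0 (f f' : nat -> R -> R) (n : nat) (y : R) :
  (forall i, derivable_pt_lim (f i) y (f' i y)) ->
  derivable_pt_lim (fun y => sum_f_R0 (fun i => f i y) n) y (sum_f_R0 (fun i => f' i y) n).
Proof.
  intro H. induction n as [|n IH]; simpl; [apply H|].
  apply (derivable_pt_lim_plus (fun y => sum_f_R0 (fun i => f i y) n) (f (S n))); auto.
Qed.

Lemma derivable_pt_lim_Series (f f' : nat -> R -> R) (c : R) (L : posreal) (C rho x : R) :
  0 <= rho < 1 -> 0 <= C -> Boule c L x ->
  (forall n u, Boule c L u -> derivable_pt_lim (f n) u (f' n u)) ->
  (forall n u, Boule c L u -> continuity_pt (f' n) u) ->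
  (forall n u, Boule c L u -> Rabs (f n u) <= C * rho ^ n /\ Rabs (f' n u) <= C * rho ^ n) ->
  derivable_pt_lim (fun u => Series (fun n => f n u)) x (Series (fun n => f' n x)).
Proof.
  intros Hr HC Hx Hd Hc Hb.
  set (K := C * rho / (1 - rho)).
  assert (HK : 0 <= K) by (apply Rdiv_le_0_compat; nra).
  assert (Htail : forall g : nat -> R -> R,
    (forall n u, Boule c L u -> Rabs (g n u) <= C * rho ^ n) ->
    forall n u, Boule c L u ->
    Rabs (Series (fun k => g k u) - sum_f_R0 (fun k => g k u) n) <= K * rho ^ n).
  { intros g Hg n u Hu. eapply Rle_trans.
    - apply (series_geom_tail (fun k => g k u) C rho Hr HC). intro k; apply Hg, Hu.
    - right; unfold K; simpl; field; lra. }
  assert (Hcvu : CVU (fun n u => sum_f_R0 (fun k => f' k u) n)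
                     (fun u => Series (fun n => f' n u)) c L).
  { apply (CVU_geom _ _ _ _ K rho Hr HK). intros n u Hu.
    apply Htail; [intros; apply Hb; auto | exact Hu]. }
  apply (derivable_pt_lim_CVU (fun n u => sum_f_R0 (fun k => f k u) n)
           (fun n u => sum_f_R0 (fun k => f' k u) n) (fun u => Series (fun n => f n u))
           (fun u => Series (fun n => f' n u)) x c L Hx).
  - intros u n Hu. apply derivable_pt_lim_sum_f_R0. intro i. apply Hd, Hu.
  - intros u Hu. apply (Un_cv_geom _ _ K rho Hr HK). intro n.
    apply Htail; [intros; apply Hb; auto | exact Hu].
  - exact Hcvu.
  - apply (CVU_continuity _ _ _ _ Hcvu). intros n u Hu.
    apply continuity_pt_finite_SF. intros; apply Hc, Hu.
Qed.

Lemma is_derive_RInt_0 (g : R -> R) : (forall x, continuous g x) ->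
  forall s, is_derive (fun s => RInt g 0 s) s (g s).
Proof.
  intros Hc s. apply (is_derive_RInt g (fun s => RInt g 0 s) 0 s); auto.
  apply filter_forall. intro b. apply (@RInt_correct R_CompleteNormedModule).
  apply (@ex_RInt_continuous R_CompleteNormedModule). intros; auto.
Qed.

Lemma abs_RInt_0_le (g : R -> R) (L M : R) : (forall x, continuous g x) ->
  (forall t, Rabs t < L -> Rabs (g t) <= M) ->
  forall s, Rabs s < L -> Rabs (RInt g 0 s) <= Rabs s * M.
Proof.
  intros Hc Hb s Hs. apply Rabs_def2 in Hs.
  assert (Hex : forall a b, ex_RInt g a b).
  { intros; apply (@ex_RInt_continuous R_CompleteNormedModule); intros; auto. }
  destruct (Rle_or_lt 0 s) as [H0|H0].
  - rewrite (Rabs_pos_eq s) by lra. replace s with (s - 0) at 2 by ring.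
    apply abs_RInt_le_const; [lra|auto|]. intros t Ht. apply Hb, Rabs_def1; lra.
  - rewrite <- opp_RInt_swap by auto. rewrite (Rabs_left s) by lra.
    change (Rabs (- RInt g s 0) <= - s * M). rewrite Rabs_Ropp. replace (- s) with (0 - s) by ring.
    apply abs_RInt_le_const; [lra|auto|]. intros t Ht. apply Hb, Rabs_def1; lra.
Qed.

Lemma continuous_of_is_derive (f : R -> R) x l : is_derive f x l -> continuous f x.
Proof. intro H. apply (@ex_derive_continuous R_AbsRing R_NormedModule). exists l; exact H. Qed.

Lemma continuity_pt_of_continuous (f : R -> R) x : continuous f x -> continuity_pt f x.
Proof. apply continuity_pt_filterlim. Qed.

(* Picard iteration for [z'' = a z], [z 0 = 1], [z' 0 = b]: [picard n] is the
   [n]-th correction term and [picard_d n], [picard_dd n] its first two derivatives. *)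
Section PicardSeries.

Variables (a : R -> R) (b kappa : R).
Hypothesis a_cont : forall u, continuous a u.

Fixpoint picard (n : nat) : R -> R :=
  match n with
  | O => fun u => 1 + b * u
  | S m => fun s => RInt (fun v => RInt (fun w => a w * picard m w) 0 v) 0 s
  end.

Definition picard_d (n : nat) : R -> R :=
  match n with
  | O => fun _ => b
  | S m => fun v => RInt (fun w => a w * picard m w) 0 v
  end.

Definition picard_dd (n : nat) : R -> R :=
  match n with
  | O => fun _ => 0
  | S m => fun w => a w * picard m w
  end.

Lemma picard_derive n : forall u,
  is_derive (picard n) u (picard_d n u) /\ is_derive (picard_d n) u (picard_dd n u).
Proof.
  induction n as [|n IH]; intro u.
  - split; simpl; auto_derive; auto; ring.
  - assert (Hdd : forall x, continuous (picard_dd (S n)) x).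
    { intro x. apply (continuous_mult a (picard n)); auto.
      apply (continuous_of_is_derive _ _ _ (proj1 (IH x))). }
    assert (Hd : forall x, is_derive (picard_d (S n)) x (picard_dd (S n) x))
      by (intro x; apply (is_derive_RInt_0 _ Hdd)).
    split; [|apply Hd].
    apply (is_derive_RInt_0 (picard_d (S n))).
    intro x. apply (continuous_of_is_derive _ _ _ (Hd x)).
Qed.

Lemma continuous_picard_d n u : continuous (picard_d n) u.
Proof. apply (continuous_of_is_derive _ _ _ (proj2 (picard_derive n u))). Qed.

Lemma continuous_picard_dd n u : continuous (picard_dd n) u.
Proof.
  destruct n as [|n]; simpl.
  - apply continuous_const.
  - apply (continuous_mult a (picard n)); auto.
    apply (continuous_of_is_derive _ _ _ (proj1 (picard_derive n u))).
Qed.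

Hypothesis a_bound : forall u, Rabs u < 2 -> Rabs (a u) <= kappa.
Hypothesis b_small : Rabs b <= 1 / 2.

Lemma kappa_ge0 : 0 <= kappa.
Proof. apply Rle_trans with (Rabs (a 0)); [apply Rabs_pos|]. apply a_bound. rewrite Rabs_R0; lra. Qed.

Lemma picard_bound n u : Rabs u < 2 ->
  Rabs (picard n u) <= 2 * (4 * kappa) ^ n /\
  Rabs (picard_d n u) <= (4 * kappa) ^ n /\
  Rabs (picard_dd n u) <= (4 * kappa) ^ n.
Proof.
  pose proof kappa_ge0 as Hk.
  revert u; induction n as [|n IH]; intros u Hu.
  - simpl. apply Rabs_def2 in Hu. pose proof (Rabs_le_between b (1 / 2)) as [Hb _].
    specialize (Hb b_small). rewrite Rabs_R0.
    split; [|split; [apply Rabs_le; lra | lra]].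
    apply Rabs_le. split; nra.
  - assert (Hp : 0 <= (4 * kappa) ^ n) by (apply pow_le; lra).
    assert (Hdd : forall t, Rabs t < 2 -> Rabs (picard_dd (S n) t) <= 2 * kappa * (4 * kappa) ^ n).
    { intros t Ht. simpl. rewrite Rabs_mult.
      replace (2 * kappa * (4 * kappa) ^ n) with (kappa * (2 * (4 * kappa) ^ n)) by ring.
      apply Rmult_le_compat; try apply Rabs_pos; [apply a_bound | apply IH]; auto. }
    assert (Hd : forall t, Rabs t < 2 -> Rabs (picard_d (S n) t) <= (4 * kappa) ^ S n).
    { intros t Ht. eapply Rle_trans.
      - apply (abs_RInt_0_le (picard_dd (S n)) 2 _ (continuous_picard_dd (S n)) Hdd t Ht).
      - simpl. apply Rle_trans with (2 * (2 * kappa * (4 * kappa) ^ n)); [|right; ring].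
        apply Rmult_le_compat_r; [nra | apply Rabs_def2 in Ht; apply Rabs_le; lra]. }
    split; [|split].
    + eapply Rle_trans.
      * apply (abs_RInt_0_le (picard_d (S n)) 2 _ (continuous_picard_d (S n)) Hd u Hu).
      * pose proof (Rabs_pos u). pose proof (pow_le _ (S n) (Rmult_le_pos 4 kappa ltac:(lra) Hk)). nra.
    + apply Hd, Hu.
    + eapply Rle_trans; [apply Hdd, Hu|]. simpl. nra.
Qed.

Definition picard_sol (u : R) : R := Series (fun n => picard n u).
Definition picard_sol_d (u : R) : R := Series (fun n => picard_d n u).

Hypothesis kappa_small : 4 * kappa < 1.

Lemma rho_range : 0 <= 4 * kappa < 1.
Proof. pose proof kappa_ge0. lra. Qed.

Definition two : posreal := mkposreal 2 ltac:(lra).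

Lemma picard_terms_dominated n u : Boule 0 two u ->
  (Rabs (picard n u) <= 2 * (4 * kappa) ^ n /\ Rabs (picard_d n u) <= 2 * (4 * kappa) ^ n) /\
  Rabs (picard_dd n u) <= 2 * (4 * kappa) ^ n.
Proof.
  intro Hu. unfold Boule in Hu; simpl in Hu. rewrite Rminus_0_r in Hu.
  pose proof (pow_le _ n (proj1 rho_range)).
  destruct (picard_bound n u Hu) as (H1 & H2 & H3). repeat split; lra.
Qed.

Lemma picard_sol_derive x : Rabs x < 2 -> derivable_pt_lim picard_sol x (picard_sol_d x).
Proof.
  intro Hx.
  apply (derivable_pt_lim_Series picard picard_d 0 two 2 (4 * kappa) x rho_range ltac:(lra)).
  - unfold Boule; simpl; rewrite Rminus_0_r; exact Hx.
  - intros n u _. apply is_derive_Reals, picard_derive.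
  - intros n u _. apply continuity_pt_of_continuous, continuous_picard_d.
  - intros n u Hu. apply picard_terms_dominated, Hu.
Qed.

Lemma picard_sol_d_derive x : Rabs x < 2 -> derivable_pt_lim picard_sol_d x (a x * picard_sol x).
Proof.
  intro Hx.
  assert (Hex : ex_series (fun n => picard_dd n x)).
  { apply (series_geom_tail _ 2 (4 * kappa) rho_range ltac:(lra)). intro n.
    apply picard_terms_dominated. unfold Boule; simpl; rewrite Rminus_0_r; exact Hx. }
  replace (a x * picard_sol x) with (Series (fun n => picard_dd n x)).
  - apply (derivable_pt_lim_Series picard_d picard_dd 0 two 2 (4 * kappa) x rho_range ltac:(lra)).
    + unfold Boule; simpl; rewrite Rminus_0_r; exact Hx.
    + intros n u _. apply is_derive_Reals, picard_derive.
    + intros n u _. apply continuity_pt_of_continuous, continuous_picard_dd.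
    + intros n u Hu. destruct (picard_terms_dominated n u Hu) as [[_ H1] H2]. auto.
  - rewrite Series_incr_1 by exact Hex. simpl. rewrite Rplus_0_l.
    apply Series_scal_l.
Qed.

Lemma picard_sol_0 : picard_sol 0 = 1 /\ picard_sol_d 0 = b.
Proof.
  assert (H0 : Rabs 0 < 2) by (rewrite Rabs_R0; lra).
  assert (Hex : forall g : nat -> R -> R, (forall n, Rabs (g n 0) <= 2 * (4 * kappa) ^ n) ->
    ex_series (fun n => g n 0)).
  { intros g Hg. apply (series_geom_tail _ 2 (4 * kappa) rho_range ltac:(lra) Hg). }
  assert (Hzero : Series (fun _ : nat => 0) = 0).
  { rewrite (Series_ext _ (fun _ => 0 * 0)) by (intro; ring). rewrite Series_scal_l. ring. }
  assert (Hbound := fun n => picard_terms_dominated n 0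
    ltac:(unfold Boule; simpl; rewrite Rminus_0_r; exact H0)).
  split.
  - unfold picard_sol. rewrite Series_incr_1 by (apply Hex; intro n; apply Hbound).
    rewrite (Series_ext _ (fun _ => 0)), Hzero.
    + simpl; ring.
    + intro n. apply (@RInt_point R_CompleteNormedModule).
  - unfold picard_sol_d. rewrite Series_incr_1 by (apply Hex; intro n; apply Hbound).
    rewrite (Series_ext _ (fun _ => 0)), Hzero.
    + simpl; ring.
    + intro n. apply (@RInt_point R_CompleteNormedModule).
Qed.

Lemma picard_sol_approx u : Rabs u < 2 ->
  Rabs (picard_sol u - (1 + b * u)) <= 8 * kappa / (1 - 4 * kappa) /\
  Rabs (picard_sol_d u - b) <= 8 * kappa / (1 - 4 * kappa).
Proof.
  intro Hu. assert (Hb : Boule 0 two u) by (unfold Boule; simpl; rewrite Rminus_0_r; exact Hu).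
  split.
  - destruct (series_geom_tail (fun n => picard n u) 2 (4 * kappa) rho_range ltac:(lra)) as [_ H].
    { intro n; apply picard_terms_dominated, Hb. }
    specialize (H 0%nat). simpl in H. replace (2 * (4 * kappa * 1)) with (8 * kappa) in H by ring.
    exact H.
  - destruct (series_geom_tail (fun n => picard_d n u) 2 (4 * kappa) rho_range ltac:(lra)) as [_ H].
    { intro n; apply picard_terms_dominated, Hb. }
    specialize (H 0%nat). simpl in H. replace (2 * (4 * kappa * 1)) with (8 * kappa) in H by ring.
    exact H.
Qed.

End PicardSeries.

Lemma derivable_pt_lim_glue (f g h : R -> R) x d l : 0 < d ->
  (forall t, x - d < t <= x -> f t = g t) -> (forall t, x <= t < x + d -> f t = h t) ->
  derivable_pt_lim g x l -> derivable_pt_lim h x l -> derivable_pt_lim f x l.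
Proof.
  intros Hd Hg Hh Dg Dh e He.
  destruct (Dg e He) as [d1 H1]. destruct (Dh e He) as [d2 H2].
  assert (Hpos : 0 < Rmin d (Rmin d1 d2)).
  { apply Rmin_pos; [lra | apply Rmin_pos; apply cond_pos]. }
  exists (mkposreal _ Hpos). intros k Hk0 Hk. simpl in Hk.
  pose proof (Rmin_l d (Rmin d1 d2)). pose proof (Rmin_r d (Rmin d1 d2)).
  pose proof (Rmin_l d1 d2). pose proof (Rmin_r d1 d2).
  assert (Hk' : - d < k < d) by (destruct (Rabs_def2 k _ Hk); lra).
  destruct (Rle_or_lt k 0).
  - rewrite !Hg by lra. apply H1; auto; lra.
  - rewrite !Hh by lra. apply H2; auto; lra.
Qed.

Lemma derivable_pt_lim_local (f g : R -> R) x a b l : a < x < b ->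
  (forall t, a < t < b -> f t = g t) -> derivable_pt_lim g x l -> derivable_pt_lim f x l.
Proof.
  intros Hx Hfg Dg.
  pose proof (Rmin_l (x - a) (b - x)). pose proof (Rmin_r (x - a) (b - x)).
  apply (derivable_pt_lim_glue f g g x (Rmin (x - a) (b - x))); auto.
  - apply Rmin_pos; lra.
  - intros t Ht. apply Hfg. lra.
  - intros t Ht. apply Hfg. lra.
Qed.

Definition glue3 (r s : R) (f g h : R -> R) (t : R) : R :=
  if Rle_dec t r then f t else if Rle_dec t s then g t else h t.

Lemma glue3_left r s f g h t : t <= r -> glue3 r s f g h t = f t.
Proof. intro Ht. unfold glue3. destruct (Rle_dec t r); [reflexivity | lra]. Qed.

Lemma glue3_middle r s f g h t : r < t <= s -> glue3 r s f g h t = g t.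
Proof.
  intro Ht. unfold glue3. destruct (Rle_dec t r); [lra|]. destruct (Rle_dec t s); [reflexivity | lra].
Qed.

Lemma glue3_right r s f g h t : r < s -> s < t -> glue3 r s f g h t = h t.
Proof.
  intros Hrs Ht. unfold glue3. destruct (Rle_dec t r); [lra|]. destruct (Rle_dec t s); [lra | reflexivity].
Qed.

Lemma derivable_pt_lim_glue3 r s (f g h f' g' h' : R -> R) : r < s ->
  (forall t, t <= r -> derivable_pt_lim f t (f' t)) ->
  (forall t, r <= t <= s -> derivable_pt_lim g t (g' t)) ->
  (forall t, s <= t -> derivable_pt_lim h t (h' t)) ->
  f r = g r -> f' r = g' r -> g s = h s -> g' s = h' s ->
  forall t, derivable_pt_lim (glue3 r s f g h) t (glue3 r s f' g' h' t).
Proof.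
  intros Hrs Df Dg Dh Er Er' Es Es' t.
  destruct (Rlt_or_le t r) as [Ht|Ht].
  { rewrite glue3_left by lra.
    apply (derivable_pt_lim_local _ f t (t - 1) r); [lra | | apply Df; lra].
    intros u Hu. apply glue3_left. lra. }
  destruct (Req_dec t r) as [->|Hr].
  { rewrite glue3_left by lra.
    apply (derivable_pt_lim_glue _ f g r (s - r)); [lra | | | apply Df; lra | rewrite Er'; apply Dg; lra].
    - intros u Hu. apply glue3_left. lra.
    - intros u Hu. destruct (Req_dec u r) as [->|Hu'].
      + rewrite glue3_left by lra. exact Er.
      + apply glue3_middle. lra. }
  destruct (Rlt_or_le t s) as [Hs|Hs].
  { rewrite glue3_middle by lra.
    apply (derivable_pt_lim_local _ g t r s); [lra | | apply Dg; lra].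
    intros u Hu. apply glue3_middle. lra. }
  destruct (Req_dec t s) as [->|Hs'].
  { rewrite glue3_middle by lra.
    apply (derivable_pt_lim_glue _ g h s (s - r)); [lra | | | apply Dg; lra | rewrite Es'; apply Dh; lra].
    - intros u Hu. apply glue3_middle. lra.
    - intros u Hu. destruct (Req_dec u s) as [->|Hu'].
      + rewrite glue3_middle by lra. exact Es.
      + apply glue3_right; lra. }
  rewrite glue3_right by lra.
  apply (derivable_pt_lim_local _ h t s (t + 1)); [lra | | apply Dh; lra].
  intros u Hu. apply glue3_right; lra.
Qed.

Lemma right_diff_quotient_of_derivable (F : R -> R) x l : derivable_pt_lim F x l ->
  forall e, 0 < e -> exists d, 0 < d /\
    forall h, 0 < h < d -> Rabs ((F (x + h) - F x) / h - l) < e.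
Proof.
  intros HF e He. destruct (HF e He) as [d Hd].
  exists d. split; [apply cond_pos|]. intros h Hh.
  apply Hd; [lra | rewrite Rabs_pos_eq; lra].
Qed.

Lemma derivable_pt_lim_affine_comp (F : R -> R) (c t0 eps t l : R) : eps <> 0 ->
  derivable_pt_lim F ((t - t0) / eps) l ->
  derivable_pt_lim (fun t => c * F ((t - t0) / eps)) t (c * l / eps).
Proof.
  intros He H. apply is_derive_Reals. apply is_derive_Reals in H.
  replace (c * l / eps) with (c * (/ eps * l)) by (field; auto).
  apply is_derive_scal.
  apply (is_derive_comp F (fun t => (t - t0) / eps) t l (/ eps)); auto.
  auto_derive; auto. field; auto.
Qed.

(* In the layer [r <= t <= r + eps] we use the variable [u = (t - (r + eps)) / eps],
   which ranges over [[-1, 0]]; there the equation becomes [z'' = layer_coef z]. *)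
Definition layer_coef (phi : R -> R) (eps u : R) : R := - (eps * eps) * (1 - 2 * phi (u + 1)).

Definition layer (phi : R -> R) (eps : R) : R -> R := picard_sol (layer_coef phi eps) (- eps).
Definition layer_d (phi : R -> R) (eps : R) : R -> R := picard_sol_d (layer_coef phi eps) (- eps).

Section Layer.

Variables (phi : R -> R) (eps : R).
Hypothesis phi_cont : forall x, continuous phi x.
Hypothesis phi_range : forall x, 0 <= phi x <= 1.
Hypothesis eps_pos : 0 < eps.
Hypothesis eps_small : eps < 1 / 2.

Lemma continuous_layer_coef u : continuous (layer_coef phi eps) u.
Proof.
  unfold layer_coef.
  apply (continuous_mult (fun _ => - (eps * eps)) (fun u => 1 - 2 * phi (u + 1))).
  { apply continuous_const. }
  apply (continuous_minus (fun _ => 1) (fun u => 2 * phi (u + 1))); [apply continuous_const|].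
  apply (continuous_mult (fun _ => 2) (fun u => phi (u + 1))); [apply continuous_const|].
  apply (continuous_comp (fun u => u + 1) phi); [|apply phi_cont].
  apply (continuous_plus (fun u => u) (fun _ => 1)); [apply continuous_id | apply continuous_const].
Qed.

Lemma layer_coef_bound u : Rabs u < 2 -> Rabs (layer_coef phi eps u) <= eps * eps.
Proof.
  intros _. unfold layer_coef. specialize (phi_range (u + 1)).
  rewrite Rabs_mult, Rabs_Ropp, Rabs_pos_eq by nra.
  assert (Rabs (1 - 2 * phi (u + 1)) <= 1) by (apply Rabs_le; lra). nra.
Qed.

Lemma layer_params : Rabs (- eps) <= 1 / 2 /\ 4 * (eps * eps) < 1.
Proof. rewrite Rabs_Ropp, Rabs_pos_eq by lra. split; nra. Qed.

Lemma layer_derive u : Rabs u < 2 -> derivable_pt_lim (layer phi eps) u (layer_d phi eps u).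
Proof.
  destruct layer_params.
  apply picard_sol_derive with (eps * eps); auto.
  - apply continuous_layer_coef.
  - apply layer_coef_bound.
Qed.

Lemma layer_d_derive u : Rabs u < 2 ->
  derivable_pt_lim (layer_d phi eps) u (layer_coef phi eps u * layer phi eps u).
Proof.
  destruct layer_params.
  apply picard_sol_d_derive with (eps * eps); auto.
  - apply continuous_layer_coef.
  - apply layer_coef_bound.
Qed.

Lemma layer_0 : layer phi eps 0 = 1 /\ layer_d phi eps 0 = - eps.
Proof.
  destruct layer_params.
  apply picard_sol_0 with (eps * eps); auto.
  - apply continuous_layer_coef.
  - apply layer_coef_bound.
Qed.

Lemma layer_approx u : Rabs u < 2 ->
  Rabs (layer phi eps u - (1 - eps * u)) <= 8 * (eps * eps) / (1 - 4 * (eps * eps)) /\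
  Rabs (layer_d phi eps u + eps) <= 8 * (eps * eps) / (1 - 4 * (eps * eps)).
Proof.
  intro Hu. destruct layer_params.
  destruct (picard_sol_approx (layer_coef phi eps) (- eps) (eps * eps)) with u as [H1 H2]; auto.
  - apply continuous_layer_coef.
  - apply layer_coef_bound.
  - unfold layer, layer_d. split.
    + replace (1 - eps * u) with (1 + - eps * u) by ring. exact H1.
    + unfold Rminus in H2. rewrite Ropp_involutive in H2. exact H2.
Qed.

Hypothesis phi_left : forall x, x <= 0 -> phi x = 0.
Hypothesis phi_right : forall x, 1 <= x -> phi x = 1.

Lemma Kpar_left r t : t <= r -> Kpar phi r eps t = 1.
Proof.
  intro Ht. unfold Kpar. rewrite phi_left; [ring|].
  unfold Rdiv. apply Rmult_le_0_r; [lra | apply Rlt_le, Rinv_0_lt_compat, eps_pos].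
Qed.

Lemma Kpar_right r t : r + eps <= t -> Kpar phi r eps t = -1.
Proof.
  intro Ht. unfold Kpar. rewrite phi_right; [ring|].
  apply (Rmult_le_reg_r eps); [exact eps_pos|].
  unfold Rdiv. rewrite Rmult_assoc, Rinv_l by lra. lra.
Qed.

(* The layer solution is scaled by [exp (- (r + eps))] so that it meets [exp (- t)]
   to first order at [r + eps]; the hypothesis on [r] is first-order matching with
   [A cos t] at [r]. *)
Lemma Ypar_of_matching r : 0 < r -> cos r <> 0 ->
  eps * layer phi eps (-1) * sin r + layer_d phi eps (-1) * cos r = 0 ->
  exists Y Y' : R -> R, is_Ypar phi r eps Y Y' /\ Y' 0 = 0.
Proof.
  intros Hr Hcos Hmatch.
  set (Z := layer phi eps). set (Z' := layer_d phi eps).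
  set (s := r + eps). set (c := exp (- s)). set (A := c * Z (-1) / cos r).
  destruct (layer_0) as [Z0 Z'0]. fold Z Z' in Z0, Z'0.
  assert (Hne : eps <> 0) by lra.
  assert (Hrs : r < s) by (unfold s; lra).
  assert (Um1 : (r - s) / eps = -1) by (unfold s; field; lra).
  assert (U0 : (s - s) / eps = 0) by (unfold Rminus; rewrite Rplus_opp_r; unfold Rdiv; ring).
  assert (Hu : forall t, r <= t <= s -> Rabs ((t - s) / eps) < 2).
  { intros t Ht. apply Rabs_def1; apply (Rmult_lt_reg_r eps); auto;
      unfold Rdiv; rewrite Rmult_assoc, Rinv_l by lra; unfold s in *; lra. }
  assert (Z'm1 : Z' (-1) = - (eps * Z (-1) * sin r) / cos r).
  { apply (Rmult_eq_reg_r (cos r)); [|exact Hcos].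
    unfold Rdiv. rewrite Rmult_assoc, Rinv_l by exact Hcos. unfold Z, Z'. lra. }
  set (Y := glue3 r s (fun t => A * cos t) (fun t => c * Z ((t - s) / eps)) (fun t => exp (- t))).
  set (Y' := glue3 r s (fun t => - (A * sin t)) (fun t => c / eps * Z' ((t - s) / eps))
                       (fun t => - exp (- t))).
  set (Y'' := glue3 r s (fun t => - (A * cos t))
                        (fun t => - Kpar phi r eps t * (c * Z ((t - s) / eps))) (fun t => exp (- t))).
  assert (DY : forall t, derivable_pt_lim Y t (Y' t)).
  { apply derivable_pt_lim_glue3; auto.
    - intros t _. apply is_derive_Reals. auto_derive; auto; ring.
    - intros t Ht. replace (c / eps * Z' ((t - s) / eps)) with (c * Z' ((t - s) / eps) / eps)
        by (field; auto).
      apply derivable_pt_lim_affine_comp; auto. apply layer_derive; auto.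
    - intros t _. apply is_derive_Reals. auto_derive; auto; ring.
    - rewrite Um1. unfold A. field. exact Hcos.
    - rewrite Um1, Z'm1. unfold A. field. auto.
    - rewrite U0, Z0. unfold c. ring.
    - rewrite U0, Z'0. unfold c. field. exact Hne. }
  assert (DY' : forall t, derivable_pt_lim Y' t (Y'' t)).
  { apply derivable_pt_lim_glue3; auto.
    - intros t _. apply is_derive_Reals. auto_derive; auto; ring.
    - intros t Ht.
      replace (- Kpar phi r eps t * (c * Z ((t - s) / eps)))
        with (c / eps * (layer_coef phi eps ((t - s) / eps) * Z ((t - s) / eps)) / eps).
      + apply derivable_pt_lim_affine_comp; auto. apply layer_d_derive; auto.
      + unfold layer_coef, Kpar.
        replace ((t - s) / eps + 1) with ((t - r) / eps) by (unfold s; field; auto).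
        field. auto.
    - intros t _. apply is_derive_Reals. auto_derive; auto; ring.
    - rewrite Um1, Z'm1. unfold A. field. auto.
    - rewrite Kpar_left, Um1 by lra. unfold A. field. exact Hcos.
    - rewrite U0, Z'0. unfold c. field. exact Hne.
    - rewrite Kpar_right, U0, Z0 by (unfold s; lra). unfold c. ring. }
  assert (HY'' : forall t, Y'' t = - Kpar phi r eps t * Y t).
  { intro t. unfold Y, Y''. destruct (Rle_or_lt t r) as [Ht|Ht].
    { rewrite !glue3_left, Kpar_left by lra. ring. }
    destruct (Rle_or_lt t s) as [Hs|Hs].
    { rewrite !glue3_middle by lra. reflexivity. }
    rewrite !glue3_right, Kpar_right by (unfold s in *; lra). ring. }
  exists Y, Y'. split; [split; [|split; [|split]]|].
  - intros t _. apply DY.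
  - intros t _. rewrite <- HY''. apply DY'.
  - intros e He.
    destruct (right_diff_quotient_of_derivable Y 0 _ (DY 0) e He) as [d [Hd H]].
    exists d. split; [exact Hd|]. intros h Hh. rewrite <- (Rplus_0_l h) at 1. apply H, Hh.
  - intros t Ht. unfold Y. destruct (Req_dec t s) as [->|Hts].
    + rewrite glue3_middle, U0, Z0 by lra. unfold c. ring.
    + rewrite glue3_right by (unfold s in *; lra). reflexivity.
  - unfold Y'. rewrite glue3_left by lra. rewrite sin_0. ring.
Qed.

Definition layer_slope : R := - layer_d phi eps (-1) / (eps * layer phi eps (-1)).

Lemma layer_slope_near_1 : eps <= 1 / 100 ->
  0 < layer phi eps (-1) /\ Rabs (layer_slope - 1) <= 20 * eps.
Proof.
  intro He.
  assert (Hm1 : Rabs (-1) < 2) by (apply Rabs_def1; lra).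
  destruct (layer_approx (-1) Hm1) as [HZ HZ'].
  assert (Herr : 8 * (eps * eps) / (1 - 4 * (eps * eps)) <= 16 * (eps * eps)).
  { assert (Hpos : 0 < 1 - 4 * (eps * eps)) by nra.
    apply (Rmult_le_reg_r _ _ _ Hpos). unfold Rdiv.
    rewrite Rmult_assoc, Rinv_l by (apply Rgt_not_eq; exact Hpos).
    assert (eps * eps <= 1 / 8) by nra. nra. }
  apply Rabs_le_between in HZ. apply Rabs_le_between in HZ'.
  unfold layer_slope. set (Z1 := layer phi eps (-1)) in *. set (Z1' := layer_d phi eps (-1)) in *.
  assert (HZ1 : 1 <= Z1) by nra.
  split; [lra|].
  replace (- Z1' / (eps * Z1) - 1) with ((- Z1' - eps * Z1) / (eps * Z1)) by (field; lra).
  assert (Hden : 0 < eps * Z1) by nra.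
  unfold Rdiv. rewrite Rabs_mult, Rabs_inv, (Rabs_pos_eq (eps * Z1)) by lra.
  apply (Rmult_le_reg_r _ _ _ Hden).
  rewrite Rmult_assoc, Rinv_l, Rmult_1_r by (apply Rgt_not_eq; exact Hden).
  apply Rabs_le. split; nra.
Qed.

Lemma layer_matching_atan : 0 < layer phi eps (-1) ->
  eps * layer phi eps (-1) * sin (atan layer_slope) + layer_d phi eps (-1) * cos (atan layer_slope) = 0.
Proof.
  intro HZ. pose proof (atan_bound layer_slope).
  assert (Hcos : 0 < cos (atan layer_slope)) by (apply cos_gt_0; lra).
  assert (Hsin : sin (atan layer_slope) = layer_slope * cos (atan layer_slope)).
  { rewrite <- (tan_atan layer_slope) at 2. unfold tan. field. lra. }
  rewrite Hsin. unfold layer_slope. field. nra.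
Qed.

End Layer.

Lemma atan_near_PI4 d : 0 < d -> exists eta, 0 < eta /\
  forall w, Rabs (w - 1) < eta -> Rabs (atan w - PI / 4) < d.
Proof.
  intro Hd. rewrite <- atan_1.
  destruct (proj1 (continuity_pt_locally atan 1) (continuity_pt_of_continuous _ _ (continuous_atan 1))
              (mkposreal d Hd)) as [eta Heta].
  exists eta. split; [apply cond_pos|]. intros w Hw. apply (Heta w Hw).
Qed.

Theorem proposition3p1 :
  forall phi : R -> R, cutoff phi ->
  forall delta : R, 0 < delta ->
  exists r eps : R,
    0 < r /\ 0 < eps /\ r + eps < PI / 2 /\
    Rabs (r - PI / 4) < delta /\ eps < delta /\
    exists Y Y' : R -> R, is_Ypar phi r eps Y Y' /\ Y' 0 = 0.
Proof.
  intros phi [[D [HD0 HD]] [Hrange [Hleft Hright]]] delta Hdelta.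
  assert (Hcont : forall x, continuous phi x).
  { intro x. apply (continuous_of_is_derive phi x (D 1%nat x)).
    apply is_derive_Reals. rewrite <- HD0. apply HD. }
  set (d := Rmin delta (1 / 2)).
  assert (Hd : 0 < d) by (apply Rmin_pos; lra).
  destruct (atan_near_PI4 d Hd) as [eta [Heta Hatan]].
  set (eps := Rmin (1 / 100) (Rmin (d / 2) (eta / 40))).
  assert (Heps : 0 < eps) by (repeat apply Rmin_pos; lra).
  assert (d <= delta /\ d <= 1 / 2) by (split; [apply Rmin_l | apply Rmin_r]).
  assert (eps <= 1 / 100 /\ eps <= d / 2 /\ eps <= eta / 40).
  { unfold eps. pose proof (Rmin_l (d / 2) (eta / 40)). pose proof (Rmin_r (d / 2) (eta / 40)).
    pose proof (Rmin_r (1 / 100) (Rmin (d / 2) (eta / 40))).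
    pose proof (Rmin_l (1 / 100) (Rmin (d / 2) (eta / 40))). lra. }
  destruct (layer_slope_near_1 phi eps Hcont Hrange Heps ltac:(lra) ltac:(lra)) as [HZ Hslope].
  assert (Hr : Rabs (atan (layer_slope phi eps) - PI / 4) < d) by (apply Hatan; lra).
  apply Rabs_le_between in Hslope. apply Rabs_def2 in Hr.
  pose proof PI2_3_2.
  exists (atan (layer_slope phi eps)), eps.
  assert (Hpos : 0 < atan (layer_slope phi eps)).
  { rewrite <- atan_0. apply atan_increasing. lra. }
  repeat split; try lra.
  - apply Rabs_def1; lra.
  - apply Ypar_of_matching; auto; try lra.
    + pose proof (atan_bound (layer_slope phi eps)). apply Rgt_not_eq, cos_gt_0; lra.
    + apply layer_matching_atan; auto; lra.
Qed.
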